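(* Let $\Lambda\subset\mathbb{Z}^2$ be finite, $K\ge 1$, and $\Sigma_K=(\{0,1\}^K)^\Lambda$. For $\alpha>0$ and $\underline Y\in\Sigma_K$ define, for $\underline X\in\Sigma_K$, $$L_\alpha(\underline X\mid \underline Y)=\alpha\sum_{i\in\Lambda}\sum_{k=1}^K \mathbf 1_{\{X_i^k=Y_i^k\}}-\sum_{k=1}^K 2^{-k}\sum_{\langle i,j\rangle}\mathbf 1_{\{X_i^k\neq X_j^k\}},$$ where $\sum_{\langle i,j\rangle}$ runs over unordered pairs $\{i,j\}\subset\Lambda$ with $|i-j|=1$. Let $F_\alpha(\underline Y)$ denote a maximizer of $L_\alpha(\cdot\mid\underline Y)$ over $\Sigma_K$ (the MAP estimator with parameter $\alpha$). Then for all $0<s\le t$ and all $\underline Y\in\Sigma_K$: if $\hat{\underline X}$ is a maximizer of $L_s(\cdot\mid \underline Y)$, then $\hat{\underline X}$ is also a maximizer of $L_t(\cdot\mid\hat{\underline X})$. In particular, whenever the maximizers are unique, $F_s(\underline Y)=F_t(F_s(\underline Y))$ for all $t\ge s$.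
   Context: Setting: an image is $\underline X=(X_i)_{i\in\Lambda}$ with $X_i=(X_i^1,\dots,X_i^K)\in\{0,1\}^K$ (binary decomposition of the color intensity). The observed image $\underline Y$ arises from $\underline X$ by flipping each bit independently with probability $\epsilon\in(0,1/2)$, so $P(\underline Y\mid\underline X)\propto\exp\{h\sum_{i}\sum_k\mathbf 1_{\{X_i^k=Y_i^k\}}\}$ with $h=\log((1-\epsilon)/\epsilon)$; the a priori measure is $\mu(\underline X)\propto e^{-\beta H(\underline X)}$ with $\beta>0$ and $H(\underline X)=\sum_{k=1}^K\sum_{\langle i,j\rangle}2^{-k}\mathbf 1_{\{X_i^k\ne X_j^k\}}$. The MAP estimator (maximizer of the posterior $P(\underline X\mid\underline Y)\propto P(\underline Y\mid\underline X)\mu(\underline X)$) is exactly a maximizer of $L_\alpha(\cdot\mid\underline Y)$ with $\alpha=h/\beta$. *)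

From mathcomp Require Import all_boot all_order all_algebra.
From mathcomp Require Import finmap.
Set Implicit Arguments. Unset Strict Implicit. Unset Printing Implicit Defensive.
Import Order.TTheory GRing.Theory Num.Theory.
Local Open Scope ring_scope.
Local Open Scope fset_scope.

Definition site := (int * int)%type.

(* Nearest neighbours on Z^2: Euclidean distance 1, i.e. |i1-j1|+|i2-j2| = 1. *)
Definition adj (i j : site) : bool :=
  (`|i.1 - j.1| + `|i.2 - j.2| == 1)%R.

(* A strict total order on sites, used to count each unordered pair once. *)
Definition site_lt (i j : site) : bool :=
  (i.1 < j.1)%R || ((i.1 == j.1) && (i.2 < j.2)%R).

(* Sigma_K = ({0,1}^K)^Lambda; bit k (k = 1..K) is stored at index k-1 : 'I_K. *)
Definition config (Lambda : {fset site}) (K : nat) :=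
  {ffun Lambda -> {ffun 'I_K -> bool}}.

Definition Lfun (R : realFieldType) (Lambda : {fset site}) (K : nat)
  (alpha : R) (X Y : config Lambda K) : R :=
  alpha * (\sum_(i : Lambda) \sum_(k < K) ((X i k == Y i k)%:R))
  - \sum_(k < K) (2 ^- k.+1) *
      (\sum_(i : Lambda) \sum_(j : Lambda | adj (val i) (val j) && site_lt (val i) (val j))
          ((X i k != X j k)%:R)).

Definition is_maximizer (R : realFieldType) (Lambda : {fset site}) (K : nat)
  (alpha : R) (Y Xh : config Lambda K) : Prop :=
  forall X : config Lambda K, Lfun alpha X Y <= Lfun alpha Xh Y.

From mathcomp Require Import all_boot all_order all_algebra.
From mathcomp Require Import finmap.
From mathcomp Require Import lra.

Set Implicit Arguments.
Unset Strict Implicit.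
Unset Printing Implicit Defensive.
Import Order.TTheory GRing.Theory Num.Theory.
Local Open Scope ring_scope.

(* Write L_a(X | Y) = a A(X, Y) - H(X), with A the number of agreeing bits.
   For binary bits, whenever X disagrees with Xh it agrees with exactly one of
   Xh and Y, so A(X, Xh) - A(Xh, Xh) <= A(X, Y) - A(Xh, Y); the left side is
   moreover <= 0.  Hence, for s <= t,
   L_t(X | Xh) - L_t(Xh | Xh) <= L_s(X | Y) - L_s(Xh | Y) <= 0. *)

Section Agreement.

Variables (R : realFieldType) (Lambda : {fset site}) (K : nat).
Implicit Types X Y Xh : config Lambda K.

Definition agreement X Y : R :=
  \sum_(i : Lambda) \sum_(k < K) ((X i k == Y i k)%:R).

Definition penalty X : R :=
  \sum_(k < K) (2 ^- k.+1) *
    (\sum_(i : Lambda) \sum_(j : Lambda | adj (val i) (val j) && site_lt (val i) (val j))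
        ((X i k != X j k)%:R)).

Lemma LfunE (alpha : R) X Y : Lfun alpha X Y = alpha * agreement X Y - penalty X.
Proof. by []. Qed.

Lemma agreement_le_self X Xh : agreement X Xh <= agreement Xh Xh.
Proof.
apply: ler_sum => i _; apply: ler_sum => k _.
by rewrite eqxx ler_nat leq_b1.
Qed.

Lemma bool_agreement_gain (x xh y : bool) :
  (x == xh)%:R - 1 <= (x == y)%:R - (xh == y)%:R :> R.
Proof. by case: x; case: xh; case: y; rewrite /= ?eqxx /=; lra. Qed.

Lemma agreement_gain_le X Xh Y :
  agreement X Xh - agreement Xh Xh <= agreement X Y - agreement Xh Y.
Proof.
rewrite /agreement -!sumrB; apply: ler_sum => i _.
rewrite -!sumrB; apply: ler_sum => k _.
by rewrite eqxx bool_agreement_gain.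
Qed.

End Agreement.

Lemma ler_wnM_trans {R : numDomainType} (s t d e : R) :
  0 <= s -> s <= t -> d <= 0 -> d <= e -> t * d <= s * e.
Proof.
move=> s_ge0 le_st d_le0 le_de.
by rewrite (le_trans (ler_wnM2r d_le0 le_st)) // ler_wpM2l.
Qed.

Theorem mainTheorem1 (R : realFieldType) (Lambda : {fset site}) (K : nat)
  (hK : (1 <= K)%N) (s t : R) (hs : 0 < s) (hst : s <= t)
  (Y Xh : config Lambda K) :
  is_maximizer s Y Xh -> is_maximizer t Xh Xh.
Proof.
move=> maxY X; have := maxY X; rewrite !LfunE.
have gain_le0 : agreement R X Xh - agreement R Xh Xh <= 0.
  by rewrite subr_le0 agreement_le_self.
have := ler_wnM_trans (ltW hs) hst gain_le0 (agreement_gain_le R X Xh Y).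
rewrite !mulrBr; lra.
Qed.
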